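(* Let $\mathcal{X}$ be an extension-closed subcategory of $\mathcal{C}$ and $\mathcal{W}$ a cogenerator for $\mathcal{X}$. Let $n\ge1$ and $C\in\mathcal{C}$. Consider: (1) $C\in\widehat{\mathcal{X}}_n$; (2) there is an $\mathbb{E}$-triangle $Y_C\to X_C\xrightarrow{\varphi_C}C\dashrightarrow$ with $X_C\in\mathcal{X}$ and $Y_C\in\widehat{\mathcal{W}}_{n-1}$; (3) there is an $\mathbb{E}$-triangle $C\xrightarrow{\psi^C}Y^C\to X^C\dashrightarrow$ with $X^C\in\mathcal{X}$ and $Y^C\in\widehat{\mathcal{W}}_n$. Then (1)$\Leftrightarrow$(2)$\Rightarrow$(3). If moreover $\mathcal{X}$ is closed under CoCones, then (3)$\Rightarrow$(2), so all three are equivalent. If moreover $\mathcal{W}$ is $\mathcal{X}$-injective, then $\varphi_C$ in (2) is an $\mathcal{X}$-precover of $C$ and $\psi^C$ in (3) is a $\widehat{\mathcal{W}}$-preenvelope of $C$.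
   Context: $\mathcal{C}=(\mathcal{C},\mathbb{E},\mathfrak{s})$ is an extriangulated category (in the sense of Nakaoka–Palu) with enough projectives and enough injectives; a conflation realizing $\delta\in\mathbb{E}(C,A)$ is written as an $\mathbb{E}$-triangle $A\to B\to C\dashrightarrow$. All subcategories are full, additive, closed under isomorphisms and direct summands. Higher extensions: $\mathbb{E}^1=\mathbb{E}$, $\mathbb{E}^{i+1}(X,Y)=\mathbb{E}(X,\Sigma^iY)\cong\mathbb{E}(\Omega^iX,Y)$. $\mathcal{X}$ is extension-closed if for every $\mathbb{E}$-triangle $A\to B\to C\dashrightarrow$ with $A,C\in\mathcal{X}$ one has $B\in\mathcal{X}$; closed under CoCones if for every $\mathbb{E}$-triangle $A\to B\to C\dashrightarrow$ with $B,C\in\mathcal{X}$ one has $A\in\mathcal{X}$. $\mathcal{W}$ is a cogenerator for $\mathcal{X}$ if $\mathcal{W}\subseteq\mathcal{X}$ and for each $X\in\mathcal{X}$ there is an $\mathbb{E}$-triangle $X\to W\to X'\dashrightarrow$ with $W\in\mathcal{W}$, $X'\in\mathcal{X}$; $\mathcal{W}$ is $\mathcal{X}$-injective if $\mathbb{E}^i(X,W)=0$ for all $X\in\mathcal{X}$, $W\in\mathcal{W}$, $i\ge1$. For a subcategory $\mathcal{Z}$ and $n\ge0$, $\widehat{\mathcal{Z}}_n$ is the subcategory of objects $C$ for which there exist $\mathbb{E}$-triangles $K_{i+1}\to Z_i\to K_i\dashrightarrow$ ($0\le i\le n-1$) with $K_0=C$, all $Z_i\in\mathcal{Z}$ and $K_n\in\mathcal{Z}$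 (so $\widehat{\mathcal{Z}}_0=\mathcal{Z}$), and $\widehat{\mathcal{Z}}=\bigcup_n\widehat{\mathcal{Z}}_n$. A morphism $f:X\to C$ is an $\mathcal{X}$-precover if $X\in\mathcal{X}$ and $\mathcal{C}(X',f)$ is surjective for all $X'\in\mathcal{X}$; a $\mathcal{Y}$-preenvelope $g:C\to Y$ is defined dually ($Y\in\mathcal{Y}$ and $\mathcal{C}(g,Y')$ surjective for all $Y'\in\mathcal{Y}$). *)

From HB Require Import structures.
From mathcomp Require Import all_boot all_algebra.
Set Implicit Arguments. Unset Strict Implicit. Unset Printing Implicit Defensive.
Import GRing.Theory.
Local Open Scope ring_scope.

(* Data of an extriangulated category:
   - Mor A B : abelian group of morphisms A -> B, comp g f = g o f;
   - Ex C A  = E(C,A), an abelian group;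
   - push a e = a_* e   (a : A -> A', e : E(C,A)),
   - pull c e = c^* e   (c : C' -> C, e : E(C,A));
   - real e x y  <-> the sequence A -x-> B -y-> C belongs to the class s(e). *)
Record ExtriData := {
  Obj : Type;
  Mor : Obj -> Obj -> zmodType;
  comp : forall A B C : Obj, Mor B C -> Mor A B -> Mor A C;
  idm : forall A : Obj, Mor A A;
  Ex : Obj -> Obj -> zmodType;
  push : forall A A' C : Obj, Mor A A' -> Ex C A -> Ex C A';
  pull : forall A C C' : Obj, Mor C' C -> Ex C A -> Ex C' A;
  real : forall A B C : Obj, Ex C A -> Mor A B -> Mor B C -> Prop
}.
Arguments Mor {e} A B.
Arguments comp {e A B C} g f.
Arguments idm {e} A.
Arguments Ex {e} C A.
Arguments push {e A A' C} a x.
Arguments pull {e A C C'} c x.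
Arguments real {e A B C} d x y.

Section Extri.
Variable T : ExtriData.
Local Notation O := (Obj T).

Definition cat_axioms : Prop :=
  (forall (A B C D : O) (h : Mor C D) (g : Mor B C) (f : Mor A B),
      comp h (comp g f) = comp (comp h g) f) /\
  (forall (A B : O) (f : Mor A B), comp (idm B) f = f /\ comp f (idm A) = f) /\
  (forall (A B C : O) (g : Mor B C) (f1 f2 : Mor A B),
      comp g (f1 + f2) = comp g f1 + comp g f2) /\
  (forall (A B C : O) (g1 g2 : Mor B C) (f : Mor A B),
      comp (g1 + g2) f = comp g1 f + comp g2 f).

Definition is_biprod (A B S : O) (i1 : Mor A S) (i2 : Mor B S)
    (p1 : Mor S A) (p2 : Mor S B) : Prop :=
  comp p1 i1 = idm A /\ comp p2 i2 = idm B /\ comp p1 i2 = 0 /\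
  comp p2 i1 = 0 /\ comp i1 p1 + comp i2 p2 = idm S.

Definition is_zero_obj (Z : O) : Prop := idm Z = 0.

Definition additive_axioms : Prop :=
  (exists Z : O, is_zero_obj Z) /\
  (forall A B : O, exists (S : O) (i1 : Mor A S) (i2 : Mor B S)
      (p1 : Mor S A) (p2 : Mor S B), is_biprod i1 i2 p1 p2).

Definition ET1 : Prop :=
  (forall (A C : O) (e : Ex C A), push (idm A) e = e) /\
  (forall (A A' A'' C : O) (a : Mor A A') (a' : Mor A' A'') (e : Ex C A),
      push (comp a' a) e = push a' (push a e)) /\
  (forall (A C : O) (e : Ex C A), pull (idm C) e = e) /\
  (forall (A C C' C'' : O) (c : Mor C' C) (c' : Mor C'' C') (e : Ex C A),
      pull (comp c c') e = pull c' (pull c e)) /\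
  (forall (A A' C C' : O) (a : Mor A A') (c : Mor C' C) (e : Ex C A),
      push a (pull c e) = pull c (push a e)) /\
  (forall (A A' C : O) (a : Mor A A') (e1 e2 : Ex C A),
      push a (e1 + e2) = push a e1 + push a e2) /\
  (forall (A C C' : O) (c : Mor C' C) (e1 e2 : Ex C A),
      pull c (e1 + e2) = pull c e1 + pull c e2) /\
  (forall (A A' C : O) (a1 a2 : Mor A A') (e : Ex C A),
      push (a1 + a2) e = push a1 e + push a2 e) /\
  (forall (A C C' : O) (c1 c2 : Mor C' C) (e : Ex C A),
      pull (c1 + c2) e = pull c1 e + pull c2 e).

Definition seq_equiv (A B B' C : O) (x : Mor A B) (y : Mor B C)
    (x' : Mor A B') (y' : Mor B' C) : Prop :=
  exists (b : Mor B B') (b' : Mor B' B),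
    comp b' b = idm B /\ comp b b' = idm B' /\ comp b x = x' /\ comp y' b = y.

Definition ET2 : Prop :=
  (* s(e) is a (nonempty) equivalence class of sequences *)
  (forall (A C : O) (e : Ex C A), exists (B : O) (x : Mor A B) (y : Mor B C),
      real e x y) /\
  (forall (A B B' C : O) (e : Ex C A) (x : Mor A B) (y : Mor B C)
      (x' : Mor A B') (y' : Mor B' C),
      real e x y -> real e x' y' -> seq_equiv x y x' y') /\
  (forall (A B B' C : O) (e : Ex C A) (x : Mor A B) (y : Mor B C)
      (x' : Mor A B') (y' : Mor B' C),
      real e x y -> seq_equiv x y x' y' -> real e x' y') /\
  (forall (A B C A' B' C' : O) (e : Ex C A) (e' : Ex C' A')
      (x : Mor A B) (y : Mor B C) (x' : Mor A' B') (y' : Mor B' C')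
      (a : Mor A A') (c : Mor C C'),
      real e x y -> real e' x' y' -> push a e = pull c e' ->
      exists b : Mor B B', comp b x = comp x' a /\ comp y' b = comp c y) /\
  (forall (A C S : O) (i1 : Mor A S) (i2 : Mor C S) (p1 : Mor S A) (p2 : Mor S C),
      is_biprod i1 i2 p1 p2 -> real (0 : Ex C A) i1 p2) /\
  (* additivity: s(e (+) e') = s(e) (+) s(e') *)
  (forall (A A' B B' C C' SA SB SC : O)
      (iA : Mor A SA) (iA' : Mor A' SA) (pA : Mor SA A) (pA' : Mor SA A')
      (iB : Mor B SB) (iB' : Mor B' SB) (pB : Mor SB B) (pB' : Mor SB B')
      (iC : Mor C SC) (iC' : Mor C' SC) (pC : Mor SC C) (pC' : Mor SC C')
      (e : Ex C A) (e' : Ex C' A') (eps : Ex SC SA)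
      (x : Mor A B) (y : Mor B C) (x' : Mor A' B') (y' : Mor B' C'),
      is_biprod iA iA' pA pA' -> is_biprod iB iB' pB pB' ->
      is_biprod iC iC' pC pC' ->
      push pA (pull iC eps) = e -> push pA' (pull iC' eps) = e' ->
      push pA (pull iC' eps) = 0 -> push pA' (pull iC eps) = 0 ->
      real e x y -> real e' x' y' ->
      real eps (comp iB (comp x pA) + comp iB' (comp x' pA'))
               (comp iC (comp y pB) + comp iC' (comp y' pB'))).

Definition ET3 : Prop :=
  forall (A B C A' B' C' : O) (e : Ex C A) (e' : Ex C' A')
      (x : Mor A B) (y : Mor B C) (x' : Mor A' B') (y' : Mor B' C')
      (a : Mor A A') (b : Mor B B'),
    real e x y -> real e' x' y' -> comp b x = comp x' a ->
    exists c : Mor C C', comp c y = comp y' b /\ push a e = pull c e'.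

Definition ET3op : Prop :=
  forall (A B C A' B' C' : O) (e : Ex C A) (e' : Ex C' A')
      (x : Mor A B) (y : Mor B C) (x' : Mor A' B') (y' : Mor B' C')
      (b : Mor B B') (c : Mor C C'),
    real e x y -> real e' x' y' -> comp y' b = comp c y ->
    exists a : Mor A A', comp x' a = comp b x /\ push a e = pull c e'.

Definition ET4 : Prop :=
  forall (A B C D F : O) (d : Ex D A) (d' : Ex F B)
      (f : Mor A B) (f' : Mor B D) (g : Mor B C) (g' : Mor C F),
    real d f f' -> real d' g g' ->
    exists (E : O) (h' : Mor C E) (dd : Mor D E) (ee : Mor E F) (d'' : Ex E A),
      real d'' (comp g f) h' /\
      comp h' g = comp dd f' /\ comp ee h' = g' /\
      real (push f' d') dd ee /\
      pull dd d'' = d /\ push f d'' = pull ee d'.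

Definition ET4op : Prop :=
  forall (A B C D F : O) (d : Ex B D) (d' : Ex C F)
      (f' : Mor D A) (f : Mor A B) (g' : Mor F B) (g : Mor B C),
    real d f' f -> real d' g' g ->
    exists (E : O) (dd : Mor D E) (ee : Mor E F) (h' : Mor E A) (d'' : Ex C E),
      real d'' h' (comp g f) /\
      comp h' dd = f' /\ comp f h' = comp g' ee /\
      real (pull g' d) dd ee /\
      push ee d'' = d' /\ push dd d = pull g d''.

Definition extriangulated : Prop :=
  cat_axioms /\ additive_axioms /\ ET1 /\ ET2 /\ ET3 /\ ET3op /\ ET4 /\ ET4op.

Definition projective (P : O) : Prop :=
  forall (A B C : O) (e : Ex C A) (x : Mor A B) (y : Mor B C),
    real e x y -> forall c : Mor P C, exists b : Mor P B, comp y b = c.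

Definition injective (I : O) : Prop :=
  forall (A B C : O) (e : Ex C A) (x : Mor A B) (y : Mor B C),
    real e x y -> forall a : Mor A I, exists b : Mor B I, comp b x = a.

Definition enough_projectives : Prop :=
  forall C : O, exists (A P : O) (x : Mor A P) (y : Mor P C) (e : Ex C A),
    projective P /\ real e x y.

Definition enough_injectives : Prop :=
  forall A : O, exists (I C : O) (x : Mor A I) (y : Mor I C) (e : Ex C A),
    injective I /\ real e x y.

(* E^{i+1}(X,Y) = E(Omega^i X, Y) = 0, for every choice of syzygies
   K_{j+1} -> P_j -> K_j (P_j projective), K_0 = X. *)
Definition ext_succ_zero (i : nat) (X Y : O) : Prop :=
  forall K : nat -> O, K 0%N = X ->
    (forall j : nat, (j < i)%N ->
       exists (P : O) (x : Mor (K j.+1) P) (y : Mor P (K j)) (e : Ex (K j) (K j.+1)),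
         projective P /\ real e x y) ->
    forall z : Ex (K i) Y, z = 0.

Definition subcategory (X : O -> Prop) : Prop :=
  (forall (A B : O) (f : Mor A B) (g : Mor B A),
      comp g f = idm A -> comp f g = idm B -> X A -> X B) /\
  (forall (A B S : O) (i1 : Mor A S) (i2 : Mor B S) (p1 : Mor S A) (p2 : Mor S B),
      is_biprod i1 i2 p1 p2 -> X S -> X A /\ X B) /\
  (forall Z : O, is_zero_obj Z -> X Z) /\
  (forall (A B S : O) (i1 : Mor A S) (i2 : Mor B S) (p1 : Mor S A) (p2 : Mor S B),
      is_biprod i1 i2 p1 p2 -> X A -> X B -> X S).

Definition extension_closed (X : O -> Prop) : Prop :=
  forall (A B C : O) (e : Ex C A) (x : Mor A B) (y : Mor B C),
    real e x y -> X A -> X C -> X B.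

Definition cocone_closed (X : O -> Prop) : Prop :=
  forall (A B C : O) (e : Ex C A) (x : Mor A B) (y : Mor B C),
    real e x y -> X B -> X C -> X A.

Definition cogenerator (W X : O -> Prop) : Prop :=
  (forall A : O, W A -> X A) /\
  (forall A : O, X A -> exists (W0 X' : O) (x : Mor A W0) (y : Mor W0 X') (e : Ex X' A),
      W W0 /\ X X' /\ real e x y).

Definition rel_injective (W X : O -> Prop) : Prop :=
  forall A W0 : O, X A -> W W0 -> forall i : nat, ext_succ_zero i A W0.

Definition hat (Z : O -> Prop) (n : nat) (C : O) : Prop :=
  exists K : nat -> O, K 0%N = C /\ Z (K n) /\
    forall i : nat, (i < n)%N ->
      exists (Zi : O) (x : Mor (K i.+1) Zi) (y : Mor Zi (K i)) (e : Ex (K i) (K i.+1)),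
        Z Zi /\ real e x y.

Definition hat_all (Z : O -> Prop) (C : O) : Prop := exists n : nat, hat Z n C.

Definition precover (X : O -> Prop) (A C : O) (f : Mor A C) : Prop :=
  X A /\ forall (A' : O) (g : Mor A' C), X A' -> exists h : Mor A' A, comp f h = g.

Definition preenvelope (Y : O -> Prop) (C B : O) (g : Mor C B) : Prop :=
  Y B /\ forall (B' : O) (h : Mor C B'), Y B' -> exists k : Mor B B', comp k g = h.

Definition cond2 (X W : O -> Prop) (n : nat) (C : O) : Prop :=
  exists (Y Xc : O) (x : Mor Y Xc) (phi : Mor Xc C) (e : Ex C Y),
    real e x phi /\ X Xc /\ hat W n.-1 Y.

Definition cond3 (X W : O -> Prop) (n : nat) (C : O) : Prop :=
  exists (Yc Xc : O) (psi : Mor C Yc) (y : Mor Yc Xc) (e : Ex Xc C),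
    real e psi y /\ X Xc /\ hat W n Yc.

End Extri.

From Pilot Require Import Defs.
From HB Require Import structures.
From mathcomp Require Import all_boot all_algebra.
Set Implicit Arguments. Unset Strict Implicit. Unset Printing Implicit Defensive.
Import GRing.Theory.

(* From (ET4)/(ET4)^op it then proves the "pushout" property: two conflations
   A -> B -> C and A -> D -> F yield conflations B -> M -> F and D -> M -> C.
   With these tools:
   - (2) => (3) and (3) => (2) are one application of (ET4), resp. (ET4)^op;
   - (1) => (3) by induction on n, with (1) => (2) as the inductive step,
     obtained from the pushout property and extension-closure of X;
   - (2) => (1) is immediate since W is contained in X;
   - under X-injectivity of W, a dimension-shifting argument shows
     E(Omega^i A, Y) = 0 for A in X and Y in hat W; exactness then turns these
     vanishings into the precover and preenvelope properties. *)

Section Extriangulated.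
Local Open Scope ring_scope.
Variable T : ExtriData.
Hypothesis HT : extriangulated T.
Local Notation O := (Obj T).
Local Notation cmp := Defs.comp.

Lemma compA (A B C D : O) (h : Mor C D) (g : Mor B C) (f : Mor A B) :
  cmp h (cmp g f) = cmp (cmp h g) f.
Proof. by case: HT => [[H _] _]. Qed.
Lemma comp1m (A B : O) (f : Mor A B) : cmp (idm B) f = f.
Proof. by case: HT => [[_ [H _]] _]; case: (H _ _ f). Qed.
Lemma compm1 (A B : O) (f : Mor A B) : cmp f (idm A) = f.
Proof. by case: HT => [[_ [H _]] _]; case: (H _ _ f). Qed.
Lemma compDr (A B C : O) (g : Mor B C) (f1 f2 : Mor A B) :
  cmp g (f1 + f2) = cmp g f1 + cmp g f2.
Proof. by case: HT => [[_ [_ [H _]]] _]. Qed.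
Lemma compDl (A B C : O) (g1 g2 : Mor B C) (f : Mor A B) :
  cmp (g1 + g2) f = cmp g1 f + cmp g2 f.
Proof. by case: HT => [[_ [_ [_ H]]] _]. Qed.

Lemma push1 (A C : O) (e : Ex C A) : push (idm A) e = e.
Proof. by case: HT => _ [_ [[H _] _]]. Qed.
Lemma pushM (A A' A'' C : O) (a : Mor A A') (a' : Mor A' A'') (e : Ex C A) :
  push (cmp a' a) e = push a' (push a e).
Proof. by case: HT => _ [_ [[_ [H _]] _]]. Qed.
Lemma pull1 (A C : O) (e : Ex C A) : pull (idm C) e = e.
Proof. by case: HT => _ [_ [[_ [_ [H _]]] _]]. Qed.
Lemma pullM (A C C' C'' : O) (c : Mor C' C) (c' : Mor C'' C') (e : Ex C A) :
  pull (cmp c c') e = pull c' (pull c e).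
Proof. by case: HT => _ [_ [[_ [_ [_ [H _]]]] _]]. Qed.
Lemma push_pull (A A' C C' : O) (a : Mor A A') (c : Mor C' C) (e : Ex C A) :
  push a (pull c e) = pull c (push a e).
Proof. by case: HT => _ [_ [[_ [_ [_ [_ [H _]]]]] _]]. Qed.
Lemma pushD (A A' C : O) (a : Mor A A') (e1 e2 : Ex C A) :
  push a (e1 + e2) = push a e1 + push a e2.
Proof. by case: HT => _ [_ [[_ [_ [_ [_ [_ [H _]]]]]] _]]. Qed.
Lemma pullD (A C C' : O) (c : Mor C' C) (e1 e2 : Ex C A) :
  pull c (e1 + e2) = pull c e1 + pull c e2.
Proof. by case: HT => _ [_ [[_ [_ [_ [_ [_ [_ [H _]]]]]]] _]]. Qed.
Lemma pushDm (A A' C : O) (a1 a2 : Mor A A') (e : Ex C A) :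
  push (a1 + a2) e = push a1 e + push a2 e.
Proof. by case: HT => _ [_ [[_ [_ [_ [_ [_ [_ [_ [H _]]]]]]]] _]]. Qed.
Lemma pullDm (A C C' : O) (c1 c2 : Mor C' C) (e : Ex C A) :
  pull (c1 + c2) e = pull c1 e + pull c2 e.
Proof. by case: HT => _ [_ [[_ [_ [_ [_ [_ [_ [_ [_ H]]]]]]]] _]]. Qed.

(* Additive maps between abelian groups preserve 0 and -: the key remark is
   that an element equal to its double is 0. *)

Lemma idem0 (V : zmodType) (x : V) : x = x + x -> x = 0.
Proof. by move=> H; apply: (addrI x); rewrite -H addr0. Qed.

Lemma comp0r (A B C : O) (g : Mor B C) : cmp g (0 : Mor A B) = 0.
Proof. by apply: idem0; rewrite -compDr addr0. Qed.
Lemma comp0l (A B C : O) (f : Mor A B) : cmp (0 : Mor B C) f = 0.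
Proof. by apply: idem0; rewrite -compDl addr0. Qed.
Lemma compBr (A B C : O) (g : Mor B C) (f1 f2 : Mor A B) :
  cmp g (f1 - f2) = cmp g f1 - cmp g f2.
Proof.
suff compNr : cmp g (- f2) = - cmp g f2 by rewrite compDr compNr.
by apply/eqP; rewrite -subr_eq0 opprK -compDr addNr comp0r.
Qed.
Lemma compBl (A B C : O) (g1 g2 : Mor B C) (f : Mor A B) :
  cmp (g1 - g2) f = cmp g1 f - cmp g2 f.
Proof.
suff compNl : cmp (- g2) f = - cmp g2 f by rewrite compDl compNl.
by apply/eqP; rewrite -subr_eq0 opprK -compDl addNr comp0l.
Qed.

Lemma push0 (A A' C : O) (a : Mor A A') : push a (0 : Ex C A) = 0.
Proof. by apply: idem0; rewrite -pushD addr0. Qed.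
Lemma pull0 (A C C' : O) (c : Mor C' C) : pull c (0 : Ex C A) = 0.
Proof. by apply: idem0; rewrite -pullD addr0. Qed.
Lemma push0m (A A' C : O) (e : Ex C A) : push (0 : Mor A A') e = 0.
Proof. by apply: idem0; rewrite -pushDm addr0. Qed.
Lemma pushB (A A' C : O) (a : Mor A A') (e1 e2 : Ex C A) :
  push a (e1 - e2) = push a e1 - push a e2.
Proof.
suff pushN : push a (- e2) = - push a e2 by rewrite pushD pushN.
by apply/eqP; rewrite -subr_eq0 opprK -pushD addNr push0.
Qed.

Lemma et2_ex (A C : O) (e : Ex C A) :
  exists (B : O) (x : Mor A B) (y : Mor B C), real e x y.
Proof. by case: HT => _ [_ [_ [[H _] _]]]. Qed.
Lemma et2_uniq (A B B' C : O) (e : Ex C A) (x : Mor A B) (y : Mor B C)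
      (x' : Mor A B') (y' : Mor B' C) :
  real e x y -> real e x' y' -> seq_equiv x y x' y'.
Proof. by case: HT => _ [_ [_ [[_ [H _]] _]]]; apply: H. Qed.
Lemma et2_tr (A B B' C : O) (e : Ex C A) (x : Mor A B) (y : Mor B C)
      (x' : Mor A B') (y' : Mor B' C) :
  real e x y -> seq_equiv x y x' y' -> real e x' y'.
Proof. by case: HT => _ [_ [_ [[_ [_ [H _]]] _]]]; apply: H. Qed.
Lemma et2_mor (A B C A' B' C' : O) (e : Ex C A) (e' : Ex C' A')
      (x : Mor A B) (y : Mor B C) (x' : Mor A' B') (y' : Mor B' C')
      (a : Mor A A') (c : Mor C C') :
  real e x y -> real e' x' y' -> push a e = pull c e' ->
  exists b : Mor B B', cmp b x = cmp x' a /\ cmp y' b = cmp c y.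
Proof. by case: HT => _ [_ [_ [[_ [_ [_ [H _]]]] _]]]; apply: H. Qed.
Lemma et2_split (A C S : O) (i1 : Mor A S) (i2 : Mor C S)
      (p1 : Mor S A) (p2 : Mor S C) :
  is_biprod i1 i2 p1 p2 -> real (0 : Ex C A) i1 p2.
Proof. by case: HT => _ [_ [_ [[_ [_ [_ [_ [H _]]]]] _]]]; apply: H. Qed.
Lemma et3 : ET3 T.
Proof. by case: HT => _ [_ [_ [_ [H _]]]]. Qed.
Lemma et3op : ET3op T.
Proof. by case: HT => _ [_ [_ [_ [_ [H _]]]]]. Qed.
Lemma et4 : ET4 T.
Proof. by case: HT => _ [_ [_ [_ [_ [_ [H _]]]]]]. Qed.
Lemma et4op : ET4op T.
Proof. by case: HT => _ [_ [_ [_ [_ [_ [_ H]]]]]]. Qed.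
Lemma zero_ex : exists Z : O, is_zero_obj Z.
Proof. by case: HT => _ [[H _] _]. Qed.
Lemma biprod_ex (A B : O) : exists (S : O) (i1 : Mor A S) (i2 : Mor B S)
      (p1 : Mor S A) (p2 : Mor S B), is_biprod i1 i2 p1 p2.
Proof. by case: HT => _ [[_ H] _]. Qed.

(* The trivial conflations B = B -> 0 and 0 -> B = B; comparing a conflation
   with them through (ET3)/(ET3)^op gives the basic vanishing facts. *)

Lemma split_l (Z B : O) : is_zero_obj Z ->
  real (0 : Ex Z B) (idm B) (0 : Mor B Z).
Proof.
move=> HZ; apply: (et2_split (i2 := 0 : Mor Z B) (p1 := idm B)).
by rewrite /is_biprod !(comp1m, compm1, comp0r, comp0l, addr0, add0r) HZ.
Qed.
Lemma split_r (Z B : O) : is_zero_obj Z ->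
  real (0 : Ex B Z) (0 : Mor Z B) (idm B).
Proof.
move=> HZ; apply: (et2_split (i2 := idm B) (p1 := 0 : Mor B Z)).
by rewrite /is_biprod !(comp1m, compm1, comp0r, comp0l, addr0, add0r) HZ.
Qed.

Lemma real_comp0 (A B C : O) (e : Ex C A) (x : Mor A B) (y : Mor B C) :
  real e x y -> cmp y x = 0.
Proof.
move=> H; case: zero_ex => Z HZ.
have [c [Hc _]] := et3 (split_l A HZ) H (a := idm A) (b := x) (erefl _).
by rewrite -Hc comp0r.
Qed.
Lemma real_pull0 (A B C : O) (e : Ex C A) (x : Mor A B) (y : Mor B C) :
  real e x y -> pull y e = 0.
Proof.
move=> H; case: zero_ex => Z HZ.
have [a [_ Ha]] := et3op (split_r B HZ) H (b := idm B) (c := y) (erefl _).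
by rewrite -Ha push0.
Qed.

Lemma fact_pull (A B C C' : O) (e : Ex C A) (x : Mor A B) (y : Mor B C)
    (c : Mor C' C) :
  real e x y -> pull c e = 0 -> exists h : Mor C' B, cmp y h = c.
Proof.
move=> H Hc; have [S [i1 [i2 [p1 [p2 Hb]]]]] := biprod_ex A C'.
have [b [_ Hyb]] := et2_mor (a := idm A) (c := c) (et2_split Hb) H
  ltac:(by rewrite push0 Hc).
exists (cmp b i2); rewrite compA Hyb -compA.
by case: Hb => _ [-> _]; rewrite compm1.
Qed.
Lemma fact_push (A A' B C : O) (e : Ex C A) (x : Mor A B) (y : Mor B C)
    (a : Mor A A') :
  real e x y -> push a e = 0 -> exists b : Mor B A', cmp b x = a.
Proof.
move=> H Ha; have [S [i1 [i2 [p1 [p2 Hb]]]]] := biprod_ex A' C.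
have [b [Hbx _]] := et2_mor (a := a) (c := idm C) H (et2_split Hb)
  ltac:(by rewrite Ha pull0).
exists (cmp p1 b); rewrite -compA Hbx compA.
by case: Hb => -> _; rewrite comp1m.
Qed.

Lemma weak_cokernel (A B C B' : O) (e : Ex C A) (x : Mor A B) (y : Mor B C)
    (phi : Mor B B') :
  real e x y -> cmp phi x = 0 -> exists k : Mor C B', cmp k y = phi.
Proof.
move=> H Hp; case: zero_ex => Z HZ.
have [c [Hc _]] := et3 H (split_r B' HZ) (a := 0 : Mor A Z) (b := phi)
  ltac:(by rewrite Hp comp0r).
by exists c; rewrite Hc comp1m.
Qed.
Lemma weak_kernel (A B C B' : O) (e : Ex C A) (x : Mor A B) (y : Mor B C)
    (phi : Mor B' B) :
  real e x y -> cmp y phi = 0 -> exists l : Mor B' A, cmp x l = phi.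
Proof.
move=> H Hp; case: zero_ex => Z HZ.
have [a [Ha _]] := et3op (split_l B' HZ) H (b := phi) (c := 0 : Mor Z C)
  ltac:(by rewrite Hp comp0l).
by exists a; rewrite Ha compm1.
Qed.

(* E(P, -) = 0 for a projective P: the realizing deflation splits. *)
Lemma proj_ext0 (P A : O) : projective P -> forall e : Ex P A, e = 0.
Proof.
move=> HP e; have [B [x [y H]]] := et2_ex e.
have [b Hb] := HP _ _ _ _ _ _ H (idm P).
by rewrite -(pull1 e) -Hb pullM (real_pull0 H) pull0.
Qed.

Lemma pull_exact (K O' P Y : O) (eps : Ex K O') (x : Mor O' P) (y : Mor P K)
    (d : Ex K Y) :
  real eps x y -> pull y d = 0 -> exists u : Mor O' Y, push u eps = d.
Proof.
move=> H Hd; have [N [m [q Hq]]] := et2_ex d.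
have [t Ht] := fact_pull Hq Hd.
have [a [_ Ha]] := et3op H Hq (b := t) (c := idm K) ltac:(by rewrite Ht comp1m).
by exists a; rewrite Ha pull1.
Qed.

Lemma push_exact (A B C F : O) (d1 : Ex C A) (f : Mor A B) (g : Mor B C)
    (th : Ex F A) :
  real d1 f g -> push f th = 0 -> exists t : Mor F C, th = pull t d1.
Proof.
move=> H Ht; have [N [j [k Hk]]] := et2_ex th.
have [b Hb] := fact_push Hk Ht.
have [c [_ Hc]] := et3 Hk H (a := idm A) (b := b) ltac:(by rewrite Hb compm1).
by exists c; rewrite -Hc push1.
Qed.

Lemma real0_biprod (A B C : O) (x : Mor A B) (y : Mor B C) :
  real (0 : Ex C A) x y -> exists (r : Mor B A) (s : Mor C B), is_biprod x s r y.
Proof.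
move=> H; have [S [i1 [i2 [p1 [p2 Hb]]]]] := biprod_ex A C.
have [b [b' [Hb'b [Hbb' [Hbx Hyb]]]]] := et2_uniq (et2_split Hb) H.
case: Hb => [H11 [H22 [H12 [H21 Hs]]]].
have sandwich (D E : O) (p : Mor S D) (i : Mor E S) :
    cmp (cmp p b') (cmp b i) = cmp p i.
  by rewrite compA -(compA p b' b) Hb'b compm1.
exists (cmp p1 b'), (cmp b i2).
have -> : y = cmp p2 b' by rewrite -Hyb -compA Hbb' compm1.
rewrite /is_biprod -Hbx !sandwich H11 H22 H12 H21; do 4 split => //.
by rewrite -!compA -compDr (compA i1) (compA i2) -compDl Hs comp1m Hbb'.
Qed.

(* An endomorphism of the middle term of a conflation compatible with both
   maps is invertible: phi - 1 has square zero. *)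
Lemma endo_iso (A B C : O) (e : Ex C A) (x : Mor A B) (y : Mor B C)
    (phi : Mor B B) :
  real e x y -> cmp phi x = x -> cmp y phi = y ->
  exists psi : Mor B B, cmp phi psi = idm B /\ cmp psi phi = idm B.
Proof.
move=> H H1 H2; pose f := phi - idm B.
have [k Hk] := weak_cokernel H (phi := f)
  ltac:(by rewrite /f compBl H1 comp1m subrr).
have [l Hl] := weak_kernel H (phi := f)
  ltac:(by rewrite /f compBr H2 compm1 subrr).
have ff : cmp f f = 0.
  by rewrite -{1}Hk -Hl compA -(compA k y x) (real_comp0 H) comp0r comp0l.
have -> : phi = idm B + f by rewrite /f addrC subrK.
exists (idm B - f); split.
  by rewrite compDl compBr compBr !comp1m compm1 ff subr0 subrK.
by rewrite compBl compDr compDr !comp1m compm1 ff addr0 addrK.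
Qed.

Lemma transport (A A' B C : O) (e : Ex C A) (x : Mor A B) (y : Mor B C)
    (a : Mor A A') (a' : Mor A' A) :
  real e x y -> cmp a' a = idm A -> cmp a a' = idm A' ->
  real (push a e) (cmp x a') y.
Proof.
move=> H Ha'a Haa'.
have [B2 [x2 [y2 H2]]] := et2_ex (push a e).
have [b2 [Hb2x Hyb2]] := et2_mor (a := a) (c := idm C) H H2
  ltac:(by rewrite pull1).
have [b1 [Hb1x Hyb1]] := et2_mor (a := a') (c := idm C) H2 H
  ltac:(by rewrite -pushM Ha'a push1 pull1).
rewrite comp1m in Hyb2; rewrite comp1m in Hyb1.
have [p1 [Hp1 _]] := endo_iso (phi := cmp b1 b2) H
  ltac:(by rewrite -compA Hb2x compA Hb1x -compA Ha'a compm1)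
  ltac:(by rewrite compA Hyb1 Hyb2).
have [p2 [_ Hp2]] := endo_iso (phi := cmp b2 b1) H2
  ltac:(by rewrite -compA Hb1x compA Hb2x -compA Haa' compm1)
  ltac:(by rewrite compA Hyb2 Hyb1).
(* b1 has left inverse p2 o b2 and right inverse b2 o p1, which coincide *)
have b1_inv : cmp p2 b2 = cmp b2 p1.
  by rewrite -[LHS]compm1 -Hp1 -(compA b1) compA -(compA p2 b2 b1) Hp2 comp1m.
apply: (et2_tr H2); exists b1, (cmp b2 p1); do ![split] => //.
  by rewrite -b1_inv -compA.
by rewrite compA.
Qed.

(* In the split conflation C -dd-> E -ee-> F produced by (ET4) inside the
   pushout construction, the section of ee can be chosen so that it pulls d''
   back to a prescribed extension d2; the correction term comes from the
   exactness of E(F, C) <- C(F, C) along d1. *)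
Lemma adjust_section (A B C E F : O) (d1 : Ex C A) (f : Mor A B) (g : Mor B C)
    (d2 : Ex F A) (d'' : Ex E A) (dd : Mor C E) (ee : Mor E F) :
  real d1 f g -> real (0 : Ex F C) dd ee ->
  pull dd d'' = d1 -> push f d'' = pull ee (push f d2) ->
  exists (s : Mor F E) (r : Mor E C), is_biprod s dd ee r /\ pull s d'' = d2.
Proof.
move=> H1 Hsplit Hd1 Hfd.
have [r [s [Hrd [Hes [Hrs [Hed Hid]]]]]] := real0_biprod Hsplit.
have [t Ht] : exists t : Mor F C, d2 - pull s d'' = pull t d1.
  apply: (push_exact H1).
  by rewrite pushB push_pull Hfd -pullM Hes pull1 subrr.
exists (s + cmp dd t), (r - cmp t ee); split; last first.
  by rewrite pullDm pullM Hd1 -Ht addrC subrK.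
rewrite /is_biprod compDr compA Hed comp0l addr0 Hes; split => //; split.
  by rewrite compBl -compA Hed comp0r oppr0 addr0.
split => //; split.
  rewrite compBl !compDr Hrs (compA r dd t) Hrd comp1m -(compA t ee s) Hes.
  rewrite compm1 -(compA t ee (cmp dd t)) (compA ee dd t) Hed comp0l comp0r.
  by rewrite add0r addr0 subrr.
by rewrite compDl compBr -(compA dd t ee) addrACA subrr addr0 addrC.
Qed.

Lemma conflation_pushout (A B C D F : O) (d1 : Ex C A) (f : Mor A B)
    (g : Mor B C) (d2 : Ex F A) (u : Mor A D) (v : Mor D F) :
  real d1 f g -> real d2 u v ->
  exists (M : O) (m1 : Mor B M) (e1 : Mor M F) (eps1 : Ex F B)
    (m2 : Mor D M) (e2 : Mor M C) (eps2 : Ex C D),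
    real eps1 m1 e1 /\ real eps2 m2 e2.
Proof.
move=> H1 H2.
have [M [m1 [e1 Heps1]]] := et2_ex (push f d2).
have [E [h' [dd [ee [d'' [R1 [_ [_ [R2 [R3 R4]]]]]]]]]] := et4 H1 Heps1.
rewrite -pushM (real_comp0 H1) push0m in R2.
have [s [r [Hb Hs]]] := adjust_section H1 R2 R3 R4.
have [G [dd2 [ee2 [h2 [d4 [Q1 [_ [_ [Q2 _]]]]]]]]] := et4op R1 (et2_split Hb).
rewrite Hs in Q2.
(* both A -> D -> F and A -> G -> F realize d2, so D and G are isomorphic *)
have [b [b' [Hb'b [Hbb' _]]]] := et2_uniq H2 Q2.
exists M, m1, e1, (push f d2), (cmp h2 b), (cmp r h'), (push b' d4).
by split => //; apply: transport.
Qed.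

Lemma hat0 (Z : O -> Prop) (C : O) : Z C -> hat Z 0 C.
Proof. by move=> HC; exists (fun _ => C). Qed.

Lemma hat0_inv (Z : O -> Prop) (C : O) : hat Z 0 C -> Z C.
Proof. by case=> K [<- [HZ _]]. Qed.

Lemma hat_tail (Z : O -> Prop) (m : nat) (C : O) : hat Z m.+1 C ->
  exists (K1 Z0 : O) (x : Mor K1 Z0) (y : Mor Z0 C) (e : Ex C K1),
    Z Z0 /\ real e x y /\ hat Z m K1.
Proof.
case=> K [<- [HZ Htri]].
have [Z0 [x [y [e [HZ0 He]]]]] := Htri 0%N isT.
exists (K 1%N), Z0, x, y, e; do 2 split => //.
by exists (fun j => K j.+1); do 2 split => //; move=> j Hj; apply: Htri.
Qed.

Lemma hat_cons (Z : O -> Prop) (m : nat) (C K1 Z0 : O) (x : Mor K1 Z0)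
    (y : Mor Z0 C) (e : Ex C K1) :
  Z Z0 -> real e x y -> hat Z m K1 -> hat Z m.+1 C.
Proof.
move=> HZ0 He [K [HK0 [HZ Htri]]]; subst K1.
exists (fun j => if j is j'.+1 then K j' else C); do 2 split => //.
by case=> [|j] Hj; [exists Z0, x, y, e | apply: Htri].
Qed.

Lemma hat_mono (Z Z' : O -> Prop) (m : nat) (C : O) :
  (forall A, Z A -> Z' A) -> hat Z m C -> hat Z' m C.
Proof.
move=> HZZ [K [HK0 [HZ Htri]]]; exists K; do 2 split => //; first exact: HZZ.
move=> j Hj; have [Zi [x [y [e [HZi He]]]]] := Htri j Hj.
by exists Zi, x, y, e; split => //; apply: HZZ.
Qed.

Definition syzygy (i : nat) (A K' : O) : Prop :=
  exists K : nat -> O, K 0%N = A /\ K i = K' /\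
    forall j, (j < i)%N -> exists (P : O) (x : Mor (K j.+1) P) (y : Mor P (K j))
      (e : Ex (K j) (K j.+1)), projective P /\ real e x y.

Lemma syzygy0 (A : O) : syzygy 0 A A.
Proof. by exists (fun _ => A). Qed.

Lemma syzygyS (i : nat) (A K' O' P : O) (x : Mor O' P) (y : Mor P K')
    (e : Ex K' O') :
  syzygy i A K' -> projective P -> real e x y -> syzygy i.+1 A O'.
Proof.
move=> [K [HK0 [HKi Htri]]] HP He; subst K'.
exists (fun j => if j == i.+1 then O' else K j); do 2 split => //.
  by rewrite eqxx.
move=> j; rewrite ltnS leq_eqVlt => /orP [/eqP -> | Hj].
  by rewrite eqxx (ltn_eqF (ltnSn i)); exists P, x, y, e.
rewrite eqSS !ltn_eqF //; last exact: ltnW.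
exact: Htri.
Qed.

Section Resolutions.
Variables X W : O -> Prop.

(* Induction on the length of the
   W-resolution K1 -> W0 -> Y of Y, using a projective cover of the syzygy. *)
Lemma syzygy_ext0 (k : nat) (Y : O) :
  rel_injective W X -> enough_projectives T -> hat W k Y ->
  forall (i : nat) (A K' : O), X A -> syzygy i A K' -> forall z : Ex K' Y, z = 0.
Proof.
move=> Hrel Hproj.
have base (W0 A K' : O) (i : nat) (z : Ex K' W0) :
    W W0 -> X A -> syzygy i A K' -> z = 0.
  move=> HW0 HA [K [HK0 [HKi Htri]]]; subst K'.
  exact: (Hrel A W0 HA HW0 i K HK0 Htri).
elim: k Y => [|k IH] Y HY i A K' HA Hs z; first exact: base (hat0_inv HY) HA Hs.
have [K1 [W0 [f [g [eta [HW0 [Heta HK1]]]]]]] := hat_tail HY.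
have [O' [P [x [y [eps [HP Heps]]]]]] := Hproj K'.
(* z vanishes on P, hence comes from a map u : Omega^{i+1} A -> Y ... *)
have [u <-] := pull_exact Heps (proj_ext0 HP (pull y z)).
(* ... which lifts to W0 because E(Omega^{i+1} A, K1) = 0 ... *)
have [w <-] := fact_pull Heta (IH _ HK1 _ _ _ HA (syzygyS Hs HP Heps) (pull u eta)).
(* ... and E(Omega^i A, W0) = 0. *)
by rewrite pushM (base _ _ _ _ (push w eps) HW0 HA Hs) push0.
Qed.

(* Under X-injectivity of W, the deflation of a conflation Y -> X_C -> C with
   Y in hat W is an X-precover: E(A, Y) = 0 for A in X gives the lifting. *)
Lemma cond2_precover (k : nat) (C Y Xc : O) (x : Mor Y Xc) (phi : Mor Xc C)
    (e : Ex C Y) :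
  rel_injective W X -> enough_projectives T ->
  real e x phi -> X Xc -> hat W k Y -> precover X phi.
Proof.
move=> Hrel Hproj Hr HX HY; split => // A' g HA'.
exact: fact_pull Hr (syzygy_ext0 Hrel Hproj HY HA' (syzygy0 A') (pull g e)).
Qed.

(* Dually, the inflation of C -> Y^C -> X^C with Y^C in hat W is a
   hat W-preenvelope: E(X^C, B) = 0 for B in hat W gives the extension. *)
Lemma cond3_preenvelope (k : nat) (C Yc Xc : O) (psi : Mor C Yc)
    (y : Mor Yc Xc) (e : Ex Xc C) :
  rel_injective W X -> enough_projectives T ->
  real e psi y -> X Xc -> hat W k Yc -> preenvelope (hat_all W) psi.
Proof.
move=> Hrel Hproj Hr HX HY; split; first by exists k.
move=> B' h [l HB'].
exact: fact_push Hr (syzygy_ext0 Hrel Hproj HB' HX (syzygy0 Xc) (push h e)).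
Qed.

Hypothesis HXext : extension_closed X.
Hypothesis HWcog : cogenerator W X.

Lemma W_sub_X (A : O) : W A -> X A.
Proof. by case: HWcog => H _; apply: H. Qed.

(* (2) => (3): compose phi_C with a W-cogenerating conflation of X_C by (ET4). *)
Lemma cond2_cond3 (m : nat) (C : O) : cond2 X W m.+1 C -> cond3 X W m.+1 C.
Proof.
case=> Y [Xc [x [phi [e [Hr [HX HY]]]]]].
case: HWcog => _ /(_ _ HX) [W0 [X' [w [v [eps [HW0 [HX' He]]]]]]].
have [E [h' [dd [ee [d'' [R1 [_ [_ [R2 _]]]]]]]]] := et4 Hr He.
exists E, X', dd, ee, (push phi eps); do 2 split => //.
exact: hat_cons HW0 R1 HY.
Qed.

(* (3) => (2) when X is closed under cocones: (ET4)^op against the first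
   conflation of the W-resolution of Y^C. *)
Lemma cond3_cond2 (m : nat) (C : O) :
  cocone_closed X -> cond3 X W m.+1 C -> cond2 X W m.+1 C.
Proof.
move=> Hcc [Yc [Xc [psi [y [e [Hr [HX HY]]]]]]].
have [K1 [W0 [a [b [d [HW0 [Hd HK1]]]]]]] := hat_tail HY.
have [E [dd [ee [h' [d'' [R1 [_ [_ [R2 _]]]]]]]]] := et4op Hd Hr.
exists K1, E, dd, ee, (pull psi d); do 2 split => //.
exact: Hcc R1 (W_sub_X HW0) HX.
Qed.

Lemma cond2_hat (m : nat) (C : O) : cond2 X W m.+1 C -> hat X m.+1 C.
Proof.
case=> Y [Xc [x [phi [e [Hr [HX HY]]]]]].
exact: hat_cons HX Hr (hat_mono W_sub_X HY).
Qed.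

Lemma cond2_of_cond3_cocone (m : nat) (C K1 X0 : O) (f : Mor K1 X0)
    (g : Mor X0 C) (d1 : Ex C K1) :
  X X0 -> real d1 f g -> cond3 X W m K1 -> cond2 X W m.+1 C.
Proof.
move=> HX0 H1 [Yc [Xc [u [v [d2 [H2 [HXc HYc]]]]]]].
have [M [m1 [e1 [eps1 [m2 [e2 [eps2 [R1 R2]]]]]]]] := conflation_pushout H1 H2.
exists Yc, M, m2, e2, eps2; do 2 split => //.
exact: HXext R1 HX0 HXc.
Qed.

Lemma hat_cond3 (m : nat) (C : O) : hat X m C -> cond3 X W m C.
Proof.
elim: m C => [|m IH] C HC.
  case: HWcog => _ /(_ _ (hat0_inv HC)) [W0 [X' [w [v [eps [HW0 [HX' He]]]]]]].
  by exists W0, X', w, v, eps; do 2 split => //; apply: hat0.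
have [K1 [X0 [f [g [d1 [HX0 [H1 HK1]]]]]]] := hat_tail HC.
exact/cond2_cond3/(cond2_of_cond3_cocone HX0 H1 (IH _ HK1)).
Qed.

Lemma hat_cond2 (m : nat) (C : O) : hat X m.+1 C -> cond2 X W m.+1 C.
Proof.
move=> HC; have [K1 [X0 [f [g [d1 [HX0 [H1 HK1]]]]]]] := hat_tail HC.
exact: cond2_of_cond3_cocone HX0 H1 (hat_cond3 HK1).
Qed.

End Resolutions.
End Extriangulated.

Theorem theorem3p7 (T : ExtriData) (HT : extriangulated T)
  (Hproj : enough_projectives T) (Hinj : enough_injectives T)
  (X W : Obj T -> Prop) (HXsub : subcategory X) (HWsub : subcategory W)
  (HXext : extension_closed X) (HWcog : cogenerator W X)
  (n : nat) (Hn : (1 <= n)%N) (C : Obj T) :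
  (hat X n C <-> cond2 X W n C) /\
  (cond2 X W n C -> cond3 X W n C) /\
  (cocone_closed X -> cond3 X W n C -> cond2 X W n C) /\
  (rel_injective W X ->
     (forall (Y Xc : Obj T) (x : Mor Y Xc) (phi : Mor Xc C) (e : Ex C Y),
        real e x phi -> X Xc -> hat W n.-1 Y -> precover X phi) /\
     (forall (Yc Xc : Obj T) (psi : Mor C Yc) (y : Mor Yc Xc) (e : Ex Xc C),
        real e psi y -> X Xc -> hat W n Yc -> preenvelope (hat_all W) psi)).
Proof.
case: n Hn => [//|m] _.
split; first split.
- exact: (hat_cond2 HT HXext HWcog).
- exact: (cond2_hat HWcog).
split; first exact: (cond2_cond3 HT HWcog).
split; first exact: (cond3_cond2 HT HWcog).
move=> Hrel; split.
- move=> Y Xc x phi e; exact: (cond2_precover HT Hrel Hproj).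
- move=> Yc Xc psi y e; exact: (cond3_preenvelope HT Hrel Hproj).
Qed.
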